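(* Let $(Q,\rightarrow)$ be a finite transition system, $\mathscr{R}$ a preorder on $Q$ and $\mathscr{P}\subseteq\mathscr{R}$ an equivalence relation. Then the following are equivalent: (i) for all $b,d,d'\in Q$ with $d\,\mathscr{P}\,d'$: $d\in\rightarrow^{-1}(\mathscr{R}(b))\iff d'\in\rightarrow^{-1}(\mathscr{R}(b))$; (ii) $\mathscr{P}\circ\rightarrow^{-1}\subseteq\rightarrow^{-1}\circ\mathscr{R}$.
   Context: For relations $\mathscr{R},\mathscr{S}$ on $Q$: $\mathscr{R}(q)=\{q'\mid q\,\mathscr{R}\,q'\}$, $\mathscr{R}(X)=\bigcup_{q\in X}\mathscr{R}(q)$, $\mathscr{R}^{-1}=\{(y,x)\mid(x,y)\in\mathscr{R}\}$, and $\mathscr{S}\circ\mathscr{R}=\{(x,y)\mid y\in\mathscr{S}(\mathscr{R}(x))\}$. A preorder is a reflexive transitive relation. Condition (i) is what the paper calls $\mathscr{P}$ being $\mathscr{R}$-block-stable; condition (ii) is $\mathscr{P}$ being $\mathscr{R}$-stable. *)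

From mathcomp Require Import all_boot.
Set Implicit Arguments. Unset Strict Implicit. Unset Printing Implicit Defensive.

Section Rel.
Variable Q : finType.

Definition rimg (R : rel Q) (q : Q) : pred Q := fun q' => R q q'.
Definition rimgS (R : rel Q) (X : pred Q) : pred Q :=
  fun q' => [exists q, X q && R q q'].
Definition rinv (R : rel Q) : rel Q := fun x y => R y x.
(* S o R = { (x,y) | y in S(R(x)) } *)
Definition rcomp (S R : rel Q) : rel Q := fun x y => rimgS S (rimg R x) y.

Definition is_preorder (R : rel Q) : Prop := reflexive R /\ transitive R.
Definition is_equivalence (R : rel Q) : Prop :=
  [/\ reflexive R, symmetric R & transitive R].
End Rel.

From mathcomp Require Import all_boot.

(* The set [->^{-1}(R(b))] of predecessors of [R]-successors of [b] contains
   every predecessor of [b] (reflexivity of [R]) and shrinks along [R]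
   (transitivity of [R]).  The first fact turns block-stability into
   stability; conversely, stability moves a predecessor [d] of [q], with
   [b R q], to a predecessor of some [q'] with [q R q'], hence [b R q']. *)

Set Implicit Arguments. Unset Strict Implicit. Unset Printing Implicit Defensive.

Section Stability.
Variables (Q : finType) (trans R P : rel Q).

Definition block_stable : Prop :=
  forall b d d', P d d' ->
    (rimgS (rinv trans) (rimg R b) d <-> rimgS (rinv trans) (rimg R b) d').

Definition stable : Prop := subrel (rcomp P (rinv trans)) (rcomp (rinv trans) R).

Lemma rimgS_rinv_rimgP b d :
  reflect (exists2 q, R b q & trans d q) (rimgS (rinv trans) (rimg R b) d).
Proof.
by apply: (iffP existsP) => [[q /andP[]] | [q]]; exists q => //; apply/andP.
Qed.

Lemma rcomp_rinvP x y :
  reflect (exists2 q, trans q x & P q y) (rcomp P (rinv trans) x y).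
Proof.
by apply: (iffP existsP) => [[q /andP[]] | [q]]; exists q => //; apply/andP.
Qed.

Lemma rimgS_rinv_rimg_refl : reflexive R ->
  forall d x, trans d x -> rimgS (rinv trans) (rimg R x) d.
Proof. by move=> Rr d x tdx; apply/rimgS_rinv_rimgP; exists x. Qed.

Lemma rimgS_rinv_rimg_trans : transitive R ->
  forall b x d, R b x -> rimgS (rinv trans) (rimg R x) d ->
  rimgS (rinv trans) (rimg R b) d.
Proof.
move=> Rt b x d Rbx /rimgS_rinv_rimgP[q Rxq tdq].
by apply/rimgS_rinv_rimgP; exists q => //; apply: Rt Rxq.
Qed.

Lemma stable_of_block_stable : reflexive R -> block_stable -> stable.
Proof.
move=> Rr bst x y /rcomp_rinvP[q tqx Pqy].
by apply/(bst x q y Pqy); apply: rimgS_rinv_rimg_refl.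
Qed.

Lemma stable_rimgS_rinv_rimg : transitive R -> stable ->
  forall b d d', P d d' -> rimgS (rinv trans) (rimg R b) d ->
  rimgS (rinv trans) (rimg R b) d'.
Proof.
move=> Rt st b d d' Pdd' /rimgS_rinv_rimgP[q Rbq tdq].
have Pd'q : rcomp P (rinv trans) q d' by apply/rcomp_rinvP; exists d.
exact: rimgS_rinv_rimg_trans Rbq (st _ _ Pd'q).
Qed.

Lemma block_stable_of_stable :
  transitive R -> symmetric P -> stable -> block_stable.
Proof.
move=> Rt Ps st b d d' Pdd'.
by split; apply: stable_rimgS_rinv_rimg => //; rewrite Ps.
Qed.

End Stability.

Theorem lemma2 (Q : finType) (trans R P : rel Q)
  (HR : is_preorder R) (HP : is_equivalence P) (HPR : subrel P R) :
  (forall b d d' : Q, P d d' ->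
     (rimgS (rinv trans) (rimg R b) d <-> rimgS (rinv trans) (rimg R b) d'))
  <-> subrel (rcomp P (rinv trans)) (rcomp (rinv trans) R).
Proof.
case: HR => Rr Rt; case: HP => _ Ps _.
split; [exact: stable_of_block_stable | exact: block_stable_of_stable].
Qed.
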